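(* Let $\alpha'\in (1/2, 1)$. For every $\varepsilon'\in (0, (1-\alpha')/3)$ there exist $\delta >0$ and $n_0'$ such that the following holds for all $n>n_0'$: every $n$-vertex graph $G$ with at least $\lfloor n^2/4\rfloor+1$ edges, minimum degree at least $(1-\delta)n/2$, and $b(G)<\alpha' n/2$ satisfies $$t(G) > (\alpha'(1-\alpha')-4\varepsilon')\frac{n^2}{4}.$$
   Context: Graphs are finite and simple. A book of size $b$ in a graph is an edge that lies in $b$ triangles; $b(G)$ denotes the maximum size of a book in $G$, i.e. the maximum, over all edges $e$ of $G$, of the number of triangles of $G$ containing $e$. $t(G)$ denotes the number of triangles in $G$. *)

From mathcomp Require Import all_boot all_order all_algebra.
From mathcomp Require Import reals.
Set Implicit Arguments. Unset Strict Implicit. Unset Printing Implicit Defensive.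

Definition simple_graph (n : nat) (g : rel 'I_n) : Prop :=
  symmetric g /\ irreflexive g.

Definition num_edges n (g : rel 'I_n) : nat :=
  #|[set p : 'I_n * 'I_n | (p.1 < p.2)%N && g p.1 p.2]|.

Definition degree n (g : rel 'I_n) (x : 'I_n) : nat := #|[set y | g x y]|.

Definition book_size n (g : rel 'I_n) (x y : 'I_n) : nat :=
  #|[set z | g x z && g y z]|.

(* b(G): maximum book size over all edges (0 if there is no edge) *)
Definition max_book n (g : rel 'I_n) : nat :=
  \max_(p : 'I_n * 'I_n | g p.1 p.2) book_size g p.1 p.2.

Definition num_triangles n (g : rel 'I_n) : nat :=
  #|[set t : 'I_n * 'I_n * 'I_n |
      [&& (t.1.1 < t.1.2)%N, (t.1.2 < t.2)%N,
          g t.1.1 t.1.2, g t.1.1 t.2 & g t.1.2 t.2]]|.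

From mathcomp Require Import all_boot all_order all_algebra.
From mathcomp Require Import reals ring lra zify.
Set Implicit Arguments. Unset Strict Implicit. Unset Printing Implicit Defensive.

(* Suppose [G] has at most the stated number of triangles, and let [D] be the
   degree bound [(1 - delta) n / 2].  Then some vertex [x] has a neighbourhood
   spanning at most [n / 2] edges, so the cut between [N(x)] and its complement
   has at least [D^2 - n] edges.  A maximum cut [(Z, ~: Z)] is at least as large,
   hence nearly balanced and missing at most [m], about [delta n^2 / 2], of the
   [|Z| |~: Z|] cross pairs.  As [e(G) > n^2 / 4 >= |Z| |~: Z|], some edge [uv]
   lies inside [Z].  Write [p_w] and [q_w] for the numbers of neighbours of [w]
   in [Z] and in [~: Z]: maximality of the cut gives [p_w <= q_w], whence
   [q_w >= D / 2]; an inner neighbour of [w] forms triangles with almost all of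
   its outer neighbours, so [t + 2m >= (p_u - 1) q_u + (p_v - 1) q_v], which is
   at least [phi q_u + phi q_v] for [phi x = x (D - 1 - x)]; and the common outer
   neighbours of [u], [v] form a book, so [q_u + q_v <= |~: Z| + b(G)].
   Minimising the concave [phi] under these constraints contradicts the bound. *)

Lemma card_set_sum (T : finType) (P : pred T) : #|[set y | P y]| = \sum_y (P y : nat).
Proof.
rewrite -sum1_card big_mkcond /=; apply: eq_bigr => i _; by rewrite inE; case: (P i).
Qed.

Lemma mul_le_sq_div4 (k m : nat) : (k * m <= (k + m) ^ 2 %/ 4)%N.
Proof. by rewrite leq_divRL // mulnC; exact: nat_AGM2. Qed.

Lemma sum_two_support (I : finType) (F : I -> nat) (u v : I) : u != v ->
  (forall s, s != u -> s != v -> F s = 0) -> \sum_s F s = F u + F v.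
Proof.
move=> nuv F0; rewrite (bigD1 u) //= (bigD1 v) /=; last by rewrite eq_sym.
by rewrite big1 ?addn0 // => s /andP[su sv]; exact: F0.
Qed.

Section SimpleGraph.
Variables (n : nat) (g : rel 'I_n).
Hypotheses (gsym : symmetric g) (girr : irreflexive g).

Definition nbhd (x : 'I_n) : {set 'I_n} := [set y | g x y].

Definition deg_in (S : {set 'I_n}) (a : 'I_n) : nat := \sum_(b in S) (g a b : nat).

Lemma degree_split (S : {set 'I_n}) a : degree g a = deg_in S a + deg_in (~: S) a.
Proof.
rewrite /degree card_set_sum (bigID (fun b => b \in S)) /=; congr (_ + _).
by apply: eq_bigl => b; rewrite inE.
Qed.

Lemma deg_inE (S : {set 'I_n}) a : deg_in S a = #|S :&: nbhd a|.
Proof.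
rewrite /deg_in -sum1_card big_mkcond [RHS]big_mkcond /=; apply: eq_bigr => b _.
by rewrite !inE; case: (b \in S); case: (g a b).
Qed.

Lemma deg_in_le_card (S : {set 'I_n}) a : deg_in S a <= #|S|.
Proof. by rewrite deg_inE subset_leq_card ?subsetIl. Qed.

Definition cut (X : {set 'I_n}) : nat := \sum_(a in X) deg_in (~: X) a.

Lemma cutC (X : {set 'I_n}) : cut (~: X) = cut X.
Proof.
rewrite /cut /deg_in setCK exchange_big /=.
by apply: eq_bigr => a _; apply: eq_bigr => b _; rewrite gsym.
Qed.

Lemma cut_le_mul (X : {set 'I_n}) : cut X <= #|X| * #|~: X|.
Proof. by rewrite /cut -sum_nat_const; apply: leq_sum => a _; exact: deg_in_le_card. Qed.

Lemma card_cross_pairs (X : {set 'I_n}) :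
  #|[set p : 'I_n * 'I_n | (p.1 \in X) && (p.2 \notin X) && g p.1 p.2]| = cut X.
Proof.
rewrite card_set_sum /cut /deg_in.
rewrite -(pair_bigA _ (fun a b => ((a \in X) && (b \notin X) && g a b : nat))) /=.
rewrite [RHS]big_mkcond /=; apply: eq_bigr => a _; case: (a \in X) => /=; last by rewrite big1.
by rewrite [RHS]big_mkcond /=; apply: eq_bigr => b _; rewrite inE; case: (b \in X).
Qed.

Lemma num_edges_le_cut (X : {set 'I_n}) :
  (forall a b, g a b -> (a \in X) != (b \in X)) -> num_edges g <= cut X.
Proof.
move=> hX; rewrite /num_edges -card_cross_pairs.
pose orient (p : 'I_n * 'I_n) := if p.1 \in X then p else (p.2, p.1).
rewrite -(card_in_imset (f := orient)).
  apply: subset_leq_card; apply/subsetP => q /imsetP[[a b]].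
  rewrite inE /= => /andP[ab gab] ->; rewrite /orient /= inE /=.
  move: (hX a b gab); case: (boolP (a \in X)) => ha; case: (boolP (b \in X)) => hb //= _.
  - by rewrite ha gab.
  - by rewrite ha gsym gab.
move=> [a b] [a' b']; rewrite !inE /= => /andP[ab _] /andP[ab' _]; rewrite /orient /=.
case: (a \in X); case: (a' \in X) => [] [] e1 e2; subst => //; lia.
Qed.

Lemma cut_setD1 (X : {set 'I_n}) u :
  u \in X -> cut (X :\ u) + deg_in (~: X) u = cut X + deg_in X u.
Proof.
move=> uX.
have degC a : deg_in (~: (X :\ u)) a = deg_in (~: X) a + g a u.
  rewrite /deg_in (bigD1 u) /=; last by rewrite !inE eqxx.
  rewrite addnC; congr (_ + _); apply: eq_bigl => b; rewrite !inE.
  by case: (b =P u) => [->|]; rewrite ?uX //= andbT.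
have degX : deg_in X u = \sum_(i | (i \in X) && (i != u)) (g i u : nat).
  by rewrite /deg_in (bigD1 u uX) /= girr add0n; apply: eq_bigr => b _; rewrite gsym.
rewrite /cut (bigD1 u uX) /= addnC degX -addnA -big_split /=.
by congr (_ + _); apply: eq_big => [a|a _]; rewrite ?degC // !inE andbC.
Qed.

Definition max_cut : {set 'I_n} := [arg max_(X > set0) cut X].

Lemma cut_le_max_cut (Y : {set 'I_n}) : cut Y <= cut max_cut.
Proof. by rewrite /max_cut; case: arg_maxnP => //= X _; apply. Qed.

Lemma max_cut_deg_in (Z : {set 'I_n}) u : (forall Y, cut Y <= cut Z) ->
  u \in Z -> deg_in Z u <= deg_in (~: Z) u.
Proof. by move=> Zmax uZ; have := cut_setD1 uZ; have := Zmax (Z :\ u); lia. Qed.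

Lemma max_cut_edge_inside : n ^ 2 %/ 4 < num_edges g ->
  exists Z u v, [/\ forall Y, cut Y <= cut Z, u \in Z, v \in Z & g u v].
Proof.
move=> hedges.
have [a [b [gab hab]]] : exists a b, g a b /\ (a \in max_cut) = (b \in max_cut).
  case: (boolP [exists a, exists b, g a b && ((a \in max_cut) == (b \in max_cut))]).
    by move=> /existsP[a /existsP[b /andP[gab /eqP hab]]]; exists a, b.
  move=> /existsPn bip; exfalso; move: hedges; apply/negP; rewrite -leqNgt.
  apply: leq_trans (num_edges_le_cut (X := max_cut) _) _.
    move=> a b gab; move: (bip a) => /existsPn /(_ b); by rewrite gab.
  apply: leq_trans (cut_le_mul _) _.
  by have := mul_le_sq_div4 #|max_cut| #|~: max_cut|; rewrite cardsC card_ord.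
exists (if a \in max_cut then max_cut else ~: max_cut), a, b.
by case: ifP => ha; split; rewrite ?inE -?hab ?ha ?cutC //; apply: cut_le_max_cut.
Qed.

Local Notation T3 := ('I_n * 'I_n * 'I_n)%type.

Definition is_triangle (t : T3) := [&& g t.1.1 t.1.2, g t.1.1 t.2 & g t.1.2 t.2].

Definition sorted_triangles : {set T3} :=
  [set t : T3 | [&& (t.1.1 < t.1.2)%N, (t.1.2 < t.2)%N,
          g t.1.1 t.1.2, g t.1.1 t.2 & g t.1.2 t.2]].

Definition sort3 (t : T3) : T3 :=
  let: (a, b, c) := t in
  if (a < b)%N then (if (b < c)%N then (a, b, c) else if (a < c)%N then (a, c, b) else (c, a, b))
  else (if (a < c)%N then (b, a, c) else if (b < c)%N then (b, c, a) else (c, b, a)).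

Definition in_triple (t : T3) (x : 'I_n) := [|| x == t.1.1, x == t.1.2 | x == t.2].

Lemma in_triple_sort3 t x : in_triple (sort3 t) x = in_triple t x.
Proof.
case: t => [[a b] c]; rewrite /sort3 /in_triple /=.
by repeat case: ifP => _; case: (x == a); case: (x == b); case: (x == c).
Qed.

Lemma sort3_triangle t : is_triangle t -> sort3 t \in sorted_triangles.
Proof.
case: t => [[a b] c]; rewrite /is_triangle /= => /and3P[hab hac hbc].
have neq_val x y : g x y -> (x : nat) != y.
  by move=> gxy; apply: contraTneq gxy => /val_inj ->; rewrite girr.
have := neq_val _ _ hab; have := neq_val _ _ hac; have := neq_val _ _ hbc.
have hba : g b a by rewrite gsym.
have hca : g c a by rewrite gsym.
have hcb : g c b by rewrite gsym.
rewrite /sort3; repeat case: ifP => ? /=; rewrite inE /= ?hab ?hac ?hbc ?hba ?hca ?hcb ?andbT; lia.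
Qed.

Lemma card_le_num_triangles (P : {set T3}) :
  {subset P <= is_triangle} ->
  {in P &, forall t t', in_triple t =1 in_triple t' -> t = t'} ->
  #|P| <= num_triangles g.
Proof.
move=> Ptri Pinj.
have -> : #|P| = #|[set sort3 t | t in P]|.
  rewrite card_in_imset // => t t' Pt Pt' e; apply: Pinj => // x.
  by rewrite -in_triple_sort3 e in_triple_sort3.
apply: subset_leq_card; apply/subsetP => s /imsetP[t tP ->].
exact/sort3_triangle/Ptri.
Qed.

Definition ordered_triangles : {set T3} := [set t | is_triangle t].

Definition rearrange (i : nat) (t : T3) : T3 :=
  let: (a, b, c) := t in
  match i with
  | 0 => (a, b, c) | 1 => (a, c, b) | 2 => (b, a, c)
  | 3 => (b, c, a) | 4 => (c, a, b) | _ => (c, b, a)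
  end.

Lemma rearrange_sort3 t : exists i : 'I_6, rearrange i (sort3 t) = t.
Proof.
case: t => [[a b] c]; rewrite /sort3.
by repeat case: ifP => _; [exists (inord 0) | exists (inord 1) | exists (inord 3)
  | exists (inord 2) | exists (inord 4) | exists (inord 5)]; rewrite inordK.
Qed.

Lemma card_ordered_triangles : #|ordered_triangles| <= 6 * num_triangles g.
Proof.
have sub : ordered_triangles \subset
    [set rearrange p.1 p.2 | p : 'I_6 * T3 in setX [set: 'I_6] sorted_triangles].
  apply/subsetP => t; rewrite inE => /sort3_triangle st.
  have [i <-] := rearrange_sort3 t.
  by apply/imsetP; exists (i, sort3 t); rewrite // in_setX in_setT.
apply: leq_trans (subset_leq_card sub) _; apply: leq_trans (leq_imset_card _ _) _.
by rewrite cardsX cardsT card_ord.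
Qed.

Definition nbhd_edges (x : 'I_n) : nat := \sum_a \sum_b ((g x a && g x b && g a b) : nat).

Lemma sum_nbhd_edges : \sum_x nbhd_edges x = #|ordered_triangles|.
Proof.
rewrite /ordered_triangles (card_set_sum (T := T3) is_triangle).
transitivity (\sum_(p : 'I_n * 'I_n) \sum_c (is_triangle (p, c) : nat)); last first.
  by rewrite pair_bigA /=; apply: eq_bigr => [[p c]] _.
rewrite -(pair_bigA _ (fun x a => \sum_c (is_triangle (x, a, c) : nat))) /=.
apply: eq_bigr => x _; apply: eq_bigr => a _; apply: eq_bigr => b _.
by rewrite /is_triangle /= andbA.
Qed.

Lemma exists_sparse_nbhd : 6 * num_triangles g < n * n.+1 -> exists x, nbhd_edges x <= n.
Proof.
case: (boolP [exists x, nbhd_edges x <= n]) => [/existsP //| /existsPn dense few].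
exfalso; move: few; rewrite ltnNge => /negP; apply; apply: leq_trans card_ordered_triangles.
have -> : n * n.+1 = \sum_(x : 'I_n) n.+1 by rewrite sum_nat_const card_ord.
by rewrite -sum_nbhd_edges; apply: leq_sum => x _; rewrite ltnNge dense.
Qed.

Lemma cut_nbhd x : cut (nbhd x) + nbhd_edges x = \sum_(a in nbhd x) degree g a.
Proof.
have -> : nbhd_edges x = \sum_(a in nbhd x) deg_in (nbhd x) a.
  rewrite /nbhd_edges [RHS]big_mkcond /=; apply: eq_bigr => a _.
  rewrite /deg_in inE; case: (g x a) => /=; last by rewrite big1.
  by rewrite [RHS]big_mkcond /=; apply: eq_bigr => b _; rewrite inE; case: (g x b).
rewrite /cut -big_split /=; apply: eq_bigr => a _.
by rewrite (degree_split (nbhd x)) addnC.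
Qed.

Definition missing (Z : {set 'I_n}) : nat := \sum_(w in Z) (#|~: Z| - deg_in (~: Z) w).

Lemma missing_add_cut Z : missing Z + cut Z = #|Z| * #|~: Z|.
Proof.
rewrite /missing /cut -big_split /= -sum_nat_const; apply: eq_bigr => w _.
by rewrite subnK // deg_in_le_card.
Qed.

Section EdgeInsideSide.
Variables (Z : {set 'I_n}) (u v : 'I_n).
Hypotheses (uZ : u \in Z) (vZ : v \in Z) (guv : g u v).

Definition common_out (s w : 'I_n) : nat := \sum_(z in ~: Z) ((g s z && g w z) : nat).

Definition inner_nbrs (s o : 'I_n) : {set 'I_n} := [set w in Z | g s w && (w != o)].

Definition out_triangles : {set T3} :=
  [set t : T3 | (((t.1.1 == u) && (t.1.2 != v)) || ((t.1.1 == v) && (t.1.2 != u)))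
       && (t.1.2 \in Z) && (t.2 \in ~: Z) && is_triangle t].

Lemma card_out_triangles_le : #|out_triangles| <= num_triangles g.
Proof.
apply: card_le_num_triangles; first by move=> t; rewrite inE => /andP[].
move=> [[s w] z] [[s' w'] z']; rewrite !inE /= /is_triangle /=.
move=> /andP[/andP[/andP[hsw wZ] zZ] /and3P[gsw gsz gwz]].
move=> /andP[/andP[/andP[hsw' wZ'] zZ'] /and3P[gsw' gsz' gwz']] hm.
have sZ : s \in Z by case/orP: hsw => /andP[/eqP -> _].
have sZ' : s' \in Z by case/orP: hsw' => /andP[/eqP -> _].
have nws : w != s by apply: contraTneq gsw => ->; rewrite girr.
have nws' : w' != s' by apply: contraTneq gsw' => ->; rewrite girr.
have wuv : (w != u) && (w != v).
  by case/orP: hsw => /andP[/eqP es h]; subst s; rewrite h ?nws // andbT.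
have wuv' : (w' != u) && (w' != v).
  by case/orP: hsw' => /andP[/eqP es h]; subst s'; rewrite h ?nws' // andbT.
have suv : (s == u) || (s == v) by case/orP: hsw => /andP[-> _]; rewrite ?orbT.
have suv' : (s' == u) || (s' == v) by case/orP: hsw' => /andP[-> _]; rewrite ?orbT.
have m1 := hm z'; have m2 := hm s'; have m3 := hm w'.
rewrite /in_triple /= !eqxx ?orbT in m1 m2 m3.
have ez : z' = z by move: m1; case/or3P => /eqP e //; subst; rewrite ?sZ ?wZ in zZ'.
have es : s' = s.
  move: m2; case/or3P => /eqP e //; subst.
  - by move: wuv; case/orP: suv' => /eqP ->; rewrite eqxx ?andbF.
  - by move: zZ; rewrite ?sZ' ?wZ'.
have ew : w' = w.
  move: m3; case/or3P => /eqP e //; subst.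
  - by move: wuv'; case/orP: suv => /eqP ->; rewrite eqxx ?andbF.
  - by move: zZ; rewrite ?sZ' ?wZ'.
by subst.
Qed.

Lemma sum_out_triangles_at s o :
  \sum_w \sum_c (((w != o) && (w \in Z) && (c \in ~: Z) && is_triangle (s, w, c)) : nat)
  = \sum_(w in inner_nbrs s o) common_out s w.
Proof.
rewrite /common_out [RHS]big_mkcond /=; apply: eq_bigr => w _.
rewrite inE /is_triangle /= andbC.
case: (w \in Z) => /=; last by rewrite big1 // => c _; rewrite andbF.
case: (g s w) => /=; last by apply: big1 => c _; rewrite !andbF.
case: (w != o) => /=; last by apply: big1.
by rewrite [RHS]big_mkcond /=; apply: eq_bigr => c _; case: (c \in ~: Z).
Qed.

Lemma card_out_triangles : #|out_triangles| =
  \sum_(w in inner_nbrs u v) common_out u w + \sum_(w in inner_nbrs v u) common_out v w.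
Proof.
pose P s w c := ((((s == u) && (w != v)) || ((s == v) && (w != u)))
       && (w \in Z) && (c \in ~: Z) && is_triangle (s, w, c)).
rewrite /out_triangles card_set_sum -!sum_out_triangles_at.
transitivity (\sum_s \sum_w \sum_c (P s w c : nat)).
  rewrite (pair_bigA _ (fun s w => \sum_c (P s w c : nat))) pair_bigA /=.
  by apply: eq_bigr => [[[s w] c]].
have nuv : u != v by apply: contraTneq guv => ->; rewrite girr.
rewrite (sum_two_support nuv); last first.
  move=> s su sv; apply: big1 => w _; apply: big1 => c _.
  by rewrite /P (negbTE su) (negbTE sv).
by rewrite /P eqxx (negbTE nuv) eq_sym (negbTE nuv) eqxx /=; under eq_bigr do rewrite orbF.
Qed.

Lemma common_out_ge s w : deg_in (~: Z) s + deg_in (~: Z) w <= common_out s w + #|~: Z|.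
Proof.
rewrite /common_out /deg_in -sum1_card -!big_split /=; apply: leq_sum => z _.
by case: (g s z); case: (g w z).
Qed.

Lemma deg_in_inner_nbrs s o : o \in Z -> g s o -> deg_in Z s = #|inner_nbrs s o| + 1.
Proof.
move=> oZ gso; rewrite deg_inE (cardsD1 o) !inE oZ gso addnC; congr (_ + _).
by apply: eq_card => w; rewrite !inE andbC andbA.
Qed.

(* An inner neighbour [w] of [s] is adjacent to all but
   [#|~: Z| - deg_in (~: Z) w] of the outer neighbours [z] of [s], and each
   common outer neighbour closes a triangle [s w z]. *)
Lemma inner_nbrs_deg_le s o :
  #|inner_nbrs s o| * deg_in (~: Z) s <= \sum_(w in inner_nbrs s o) common_out s w + missing Z.
Proof.
have sub : \sum_(w in inner_nbrs s o) (#|~: Z| - deg_in (~: Z) w) <= missing Z.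
  rewrite /missing [X in _ <= X](bigID (fun w => g s w && (w != o))) /=.
  by apply: leq_trans (leq_addr _ _); apply: eq_leq; apply: eq_bigl => w; rewrite inE.
apply: leq_trans (leq_add (leqnn _) sub); rewrite -big_split /= -sum_nat_const.
apply: leq_sum => w _; have := common_out_ge s w; have := deg_in_le_card (~: Z) w.
by move: #|~: Z| (common_out s w) (deg_in (~: Z) s) (deg_in (~: Z) w); lia.
Qed.

Lemma deg_in_triangle_bound :
  deg_in Z u * deg_in (~: Z) u + deg_in Z v * deg_in (~: Z) v
    <= num_triangles g + 2 * missing Z + deg_in (~: Z) u + deg_in (~: Z) v.
Proof.
have gvu : g v u by rewrite gsym.
rewrite (deg_in_inner_nbrs vZ guv) (deg_in_inner_nbrs uZ gvu) !mulnDl !mul1n.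
have := inner_nbrs_deg_le u v; have := inner_nbrs_deg_le v u.
have := card_out_triangles_le; rewrite card_out_triangles; lia.
Qed.

Lemma deg_out_book_bound : deg_in (~: Z) u + deg_in (~: Z) v <= max_book g + #|~: Z|.
Proof.
apply: leq_trans (common_out_ge u v) _; rewrite leq_add2r.
apply: (@leq_trans (book_size g u v)).
  rewrite /book_size card_set_sum /common_out [X in X <= _]big_mkcond /=.
  by apply: leq_sum => z _; case: (z \in ~: Z).
exact: (@leq_bigmax_cond _ (fun p : 'I_n * 'I_n => g p.1 p.2)
  (fun p => book_size g p.1 p.2) (u, v)).
Qed.
End EdgeInsideSide.
End SimpleGraph.

Import Order.TTheory GRing.Theory Num.Theory.
Local Open Scope ring_scope.

Section Parabola.
Variable R : realFieldType.
Implicit Types K x p q a b L U S Q : R.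

Definition parab K x : R := x * (K - x).

Lemma parab_between K p q x :
  p <= x -> x <= q -> parab K p <= parab K x \/ parab K q <= parab K x.
Proof.
move=> px xq; rewrite /parab.
by have [h|h] := lerP 0 (K - x - p); [left|right]; nra.
Qed.

(* Moving [a] and [b] apart while keeping [a + b] fixed decreases the sum of
   the values of the concave [parab K]; the extreme configurations are the
   three pairs in the hypotheses. *)
Lemma parab_pair_gt K L U S a b Q :
  L <= a -> a <= U -> L <= b -> b <= U -> a + b <= S ->
  Q < parab K L + parab K U -> Q < parab K U + parab K (S - U) ->
  Q < parab K L + parab K L -> Q < parab K a + parab K b.
Proof.
move=> La aU Lb bU abS h1 h2 h3.
have [c|c] := lerP (L + U) (a + b).
- have e : parab K U + parab K (a + b - U) <= parab K a + parab K b by rewrite /parab; nra.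
  by have [e2|e2] := @parab_between K L (S - U) (a + b - U) ltac:(lra) ltac:(lra); lra.
- have e : parab K L + parab K (a + b - L) <= parab K a + parab K b by rewrite /parab; nra.
  by have [e2|e2] := @parab_between K L U (a + b - L) ltac:(lra) ltac:(lra); lra.
Qed.

Lemma parab_le_mul D p A : D <= p + A -> 0 <= A -> parab (D - 1) A <= (p - 1) * A.
Proof. by move=> h1 h2; rewrite /parab mulrC; apply: ler_wpM2r => //; lra. Qed.

End Parabola.
Arguments parab {R}.

Section Estimates.
Variable R : realFieldType.

Lemma cut_balance (N y z c m D d : R) :
  z + y = N -> D = (1 - d) * N / 2 -> 0 <= d -> 0 <= m -> m + c = z * y -> D * D - N <= c ->
  (y - N / 2) ^+ 2 <= d / 2 * N ^+ 2 + N /\ m <= N ^+ 2 / 4 - D ^+ 2 + N.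
Proof.
move=> hz hD d0 m0 hm hc.
have e1 : z * y = N ^+ 2 / 4 - (y - N / 2) ^+ 2 by rewrite (_ : z = N - y); [field | lra].
have e2 : N ^+ 2 / 4 - D ^+ 2 = d / 2 * N ^+ 2 - d ^+ 2 * N ^+ 2 / 4 by rewrite hD; field.
have e3 : 0 <= d ^+ 2 * N ^+ 2 / 4 by rewrite -exprMn; apply: divr_ge0; rewrite ?sqr_ge0.
have e4 := sqr_ge0 (y - N / 2).
have e5 : D ^+ 2 = D * D by rewrite expr2.
by split; lra.
Qed.

Lemma dev_half_le (ep N y : R) : 0 < ep -> 32 < ep ^+ 2 * N ->
  (y - N / 2) ^+ 2 <= ep ^+ 2 / 16 / 2 * N ^+ 2 + N ->
  y - N / 2 <= ep / 4 * N /\ N / 2 - y <= ep / 4 * N.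
Proof.
move=> ep0 hN hy.
have N0 : 0 < N by nra.
have sq : (y - N / 2) ^+ 2 <= (ep / 4 * N) ^+ 2.
  have : N <= ep ^+ 2 / 16 / 2 * N ^+ 2 by rewrite expr2; nra.
  have -> : (ep / 4 * N) ^+ 2 = ep ^+ 2 / 16 * N ^+ 2 by field.
  lra.
have h0 : 0 <= ep / 4 * N by nra.
by split; nra.
Qed.

Lemma parab_bounds (al ep N y m D Q : R) :
  1 / 2 < al < 1 -> 0 < ep < (1 - al) / 3 -> 32 < ep ^+ 2 * N -> 100 < ep * N ->
  y - N / 2 <= ep / 4 * N -> N / 2 - y <= ep / 4 * N ->
  m <= N ^+ 2 / 4 - D ^+ 2 + N -> D = (1 - ep ^+ 2 / 16) * N / 2 ->
  Q = (al * (1 - al) - 4 * ep) * N ^+ 2 / 4 + 2 * m ->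
  [/\ Q < parab (D - 1) (D / 2) + parab (D - 1) y,
      Q < parab (D - 1) y + parab (D - 1) (al * N / 2)
    & Q < parab (D - 1) (D / 2) + parab (D - 1) (D / 2)].
Proof.
move=> /andP[a1 a2] /andP[e1 e2] hN1 hN2 hy1 hy2 hm hD hQ.
have N0 : 0 < N by nra.
set d := ep ^+ 2 / 16 in hD.
have d0 : 0 < d by rewrite /d; nra.
have dep : d <= ep / 16 by rewrite /d; nra.
have dN : 2 <= d * N by rewrite /d; nra.
clearbody d.
have e6 : al * (1 - al) <= 1 / 4 by nra.
have small_dev : ep / 4 * N <= N / 8 by nra.
have y0 : 0 <= y by lra.
have yN : y <= N by lra.
have pU : - N * (ep / 4 * N + d * N / 2 + 1) <= parab (D - 1) y.
  rewrite /parab hD.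
  have : - (ep / 4 * N + d * N / 2 + 1) <= (1 - d) * N / 2 - 1 - y by lra.
  nra.
have pL : N ^+ 2 / 16 - d * N ^+ 2 / 8 - N / 4 <= parab (D - 1) (D / 2).
  by rewrite /parab hD; nra.
have pA : al * (1 - al) * N ^+ 2 / 4 - d * N ^+ 2 / 4 - N / 2 <= parab (D - 1) (al * N / 2).
  have : 0 <= (1 - al) * (d * N ^+ 2 / 4 + N / 2).
    by apply: mulr_ge0; [lra | apply: addr_ge0; [apply: divr_ge0; nra | lra]].
  by rewrite /parab hD; nra.
have hm2 : 2 * m <= d * N ^+ 2 + 2 * N by move: hm; rewrite hD; nra.
have epN2 : ep * N ^+ 2 = (ep * N) * N by rewrite expr2 mulrA.
have dN2 : d * N ^+ 2 = (d * N) * N by rewrite expr2 mulrA.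
have epN2_4 : ep / 4 * N * N = ep * N ^+ 2 / 4 by rewrite expr2; field.
by rewrite hQ; split; nra.
Qed.

Lemma triangles_gt_real (al ep N y z c m A B D t : R) :
  1 / 2 < al < 1 -> 0 < ep < (1 - al) / 3 -> 32 < ep ^+ 2 * N -> 100 < ep * N ->
  D = (1 - ep ^+ 2 / 16) * N / 2 ->
  z + y = N -> 0 <= m -> m + c = z * y -> D * D - N <= c ->
  D / 2 <= A <= y -> D / 2 <= B <= y -> A + B <= y + al * N / 2 ->
  parab (D - 1) A + parab (D - 1) B <= t + 2 * m ->
  (al * (1 - al) - 4 * ep) * N ^+ 2 / 4 < t.
Proof.
move=> ha he hN1 hN2 hD hzy m0 hm hc /andP[A1 A2] /andP[B1 B2] hAB hpar.
have ep0 : 0 < ep by case/andP: he.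
have d0 : 0 <= ep ^+ 2 / 16 by apply: divr_ge0; rewrite ?sqr_ge0.
have [dev hm'] := cut_balance hzy hD d0 m0 hm hc.
have [dev1 dev2] := dev_half_le ep0 hN1 dev.
have [p1 p2 p3] := parab_bounds ha he hN1 hN2 dev1 dev2 hm' hD erefl.
have e : al * N / 2 = y + al * N / 2 - y by rewrite addrAC subrr add0r.
rewrite e in p2.
have := parab_pair_gt A1 A2 B1 B2 hAB p1 p2 p3; lra.
Qed.

End Estimates.

Lemma cut_nbhd_ge (R : realFieldType) n (g : rel 'I_n) (D : R) x :
  0 <= D -> (forall a, D <= (degree g a)%:R) -> (nbhd_edges g x <= n)%N ->
  D * D - n%:R <= (cut g (nbhd g x))%:R.
Proof.
move=> D0 hdeg sparse.
have sum_deg : #|nbhd g x|%:R * D <= (\sum_(a in nbhd g x) degree g a)%:R.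
  by rewrite natr_sum mulr_natl -sumr_const; apply: ler_sum => a _.
have : D * D <= #|nbhd g x|%:R * D by apply: ler_wpM2r => //; exact: hdeg x.
move: sum_deg; rewrite -cut_nbhd natrD; rewrite -(ler_nat R) in sparse; lra.
Qed.

Lemma triangles_gt_of_max_cut (R : realFieldType) n (g : rel 'I_n) (al ep : R) Z u v :
  symmetric g -> irreflexive g ->
  1 / 2 < al < 1 -> 0 < ep < (1 - al) / 3 -> 32 < ep ^+ 2 * n%:R -> 100 < ep * n%:R ->
  (forall a, (1 - ep ^+ 2 / 16) * n%:R / 2 <= (degree g a)%:R) ->
  (max_book g)%:R < al * n%:R / 2 ->
  (forall Y, (cut g Y <= cut g Z)%N) -> u \in Z -> v \in Z -> g u v ->
  ((1 - ep ^+ 2 / 16) * n%:R / 2) * ((1 - ep ^+ 2 / 16) * n%:R / 2) - n%:R <= (cut g Z)%:R ->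
  (al * (1 - al) - 4 * ep) * n%:R ^+ 2 / 4 < (num_triangles g)%:R.
Proof.
move=> gsym girr ha he hN1 hN2 hdeg hbook Zmax uZ vZ guv hcut.
set D := (1 - ep ^+ 2 / 16) * n%:R / 2 in hdeg hcut.
have out_deg w : w \in Z -> [/\ D / 2 <= (deg_in g (~: Z) w)%:R,
    (deg_in g (~: Z) w)%:R <= #|~: Z|%:R :> R
  & parab (D - 1) (deg_in g (~: Z) w)%:R <= ((deg_in g Z w)%:R - 1) * (deg_in g (~: Z) w)%:R].
  move=> wZ; have := hdeg w; rewrite (degree_split g Z) natrD => Dw.
  have := max_cut_deg_in gsym girr Zmax wZ; rewrite -(ler_nat R) => loc.
  split; [lra | by rewrite ler_nat deg_in_le_card | exact: parab_le_mul].
have [u1 u2 u3] := out_deg u uZ; have [v1 v2 v3] := out_deg v vZ.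
have := deg_in_triangle_bound gsym girr uZ vZ guv; rewrite -(ler_nat R) !natrD !natrM => tri.
have := deg_out_book_bound Z guv; rewrite -(ler_nat R) !natrD => book.
apply: (triangles_gt_real (z := #|Z|%:R) (y := #|~: Z|%:R) (m := (missing g Z)%:R)
  (A := (deg_in g (~: Z) u)%:R) (B := (deg_in g (~: Z) v)%:R) ha he hN1 hN2 erefl _ _ _ hcut).
- by rewrite -natrD cardsC card_ord.
- exact: ler0n.
- by rewrite -natrD -natrM missing_add_cut.
- by rewrite u1 u2.
- by rewrite v1 v2.
- lra.
- lra.
Qed.

Lemma archi_bound_eps (R : archiRealFieldType) (ep : R) n : 0 < ep ->
  (Num.Def.archi_bound (32 / ep ^+ 2 + 100 / ep) < n)%N ->
  32 < ep ^+ 2 * n%:R /\ 100 < ep * n%:R.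
Proof.
move=> ep0 hn.
have p1 : 0 <= 32 / ep ^+ 2 by rewrite divr_ge0 ?exprn_ge0 ?ltW.
have p2 : 0 <= 100 / ep by rewrite divr_ge0 ?ltW.
have : 32 / ep ^+ 2 + 100 / ep < n%:R.
  by apply: lt_le_trans (archi_boundP (addr_ge0 p1 p2)) _; rewrite ler_nat ltnW.
move=> hB; have h1 : 32 / ep ^+ 2 < n%:R by lra.
have h2 : 100 / ep < n%:R by lra.
by rewrite ltr_pdivrMr ?exprn_gt0 // mulrC in h1; rewrite ltr_pdivrMr // mulrC in h2.
Qed.

Lemma six_triangles_lt (R : realFieldType) (al ep : R) (n t : nat) : 0 < ep -> (0 < n)%N ->
  t%:R <= (al * (1 - al) - 4 * ep) * n%:R ^+ 2 / 4 -> (6 * t < n * n.+1)%N.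
Proof.
move=> ep0 n0 ht; rewrite -(ltr_nat R) natrM -addn1 !natrD natrM.
have : al * (1 - al) <= 1 / 4 by have := sqr_ge0 (al - 1 / 2); nra.
have := sqr_ge0 (n%:R : R); rewrite expr2 in ht * => sq quarter.
have N1 : 1 <= n%:R :> R by rewrite ler1n.
have : (al * (1 - al) - 4 * ep) * (n%:R * n%:R) / 4 <= n%:R * n%:R / 16 by nra.
nra.
Qed.

Theorem theorem5 (R : realType) (alpha' : R) :
  1 / 2 < alpha' < 1 ->
  forall eps' : R, 0 < eps' < (1 - alpha') / 3 ->
  exists (delta : R) (n0' : nat), 0 < delta /\
    forall (n : nat) (g : rel 'I_n), (n0' < n)%N ->
      simple_graph g ->
      ((n ^ 2) %/ 4 + 1 <= num_edges g)%N ->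
      (forall x : 'I_n, (1 - delta) * n%:R / 2 <= (degree g x)%:R) ->
      (max_book g)%:R < alpha' * n%:R / 2 ->
      (alpha' * (1 - alpha') - 4 * eps') * (n%:R ^+ 2) / 4 < (num_triangles g)%:R.
Proof.
move=> ha eps' he; have ep0 : 0 < eps' by case/andP: he.
exists (eps' ^+ 2 / 16), (Num.Def.archi_bound (32 / eps' ^+ 2 + 100 / eps')).
split; first by rewrite divr_gt0 ?exprn_gt0.
move=> n g hn [gsym girr]; rewrite addn1 => hedges hdeg hbook.
have [hN1 hN2] := archi_bound_eps ep0 hn.
set D := (1 - eps' ^+ 2 / 16) * n%:R / 2 in hdeg *.
have D0 : 0 <= D by rewrite /D !mulr_ge0 //; have /andP[_ ?] := he; nra.
rewrite ltNge; apply/negP => few.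
have [x sparse] :=
  exists_sparse_nbhd gsym girr (six_triangles_lt ep0 (leq_ltn_trans (leq0n _) hn) few).
have [Z [u [v [Zmax uZ vZ guv]]]] := max_cut_edge_inside gsym hedges.
have hcut : D * D - n%:R <= (cut g Z)%:R.
  by apply: le_trans (cut_nbhd_ge D0 hdeg sparse) _; rewrite ler_nat.
have := triangles_gt_of_max_cut gsym girr ha he hN1 hN2 hdeg hbook Zmax uZ vZ guv hcut.
by rewrite ltNge few.
Qed.
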